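(* $\mathsf{AP}(R_2,R_1)=\mathsf{AP}(R_3,R_1)=\mathsf{\Omega(1)}$.
   Context: Tuples in $\{0,1\}^4$ are written as strings $abcd$. The relations $R_1,\dots,R_5\subseteq\{0,1\}^4$ are $R_1=\{0000,1000,0100,1100,1010,0110,1001,0101,0011,1011,0111,1111\}$, $R_2=\{0000,1000,0100,1100,1010,0101,0011,1111\}$, $R_3=\{0000,1100,1010,0101,0011,1011,0111,1111\}$, $R_4=\{0000,1100,1010,0101,0011,1111\}$, $R_5=\{0000,1100,1010,0110,1001,0101,0011,1111\}$. For $R,S\subseteq\{0,1\}^4$, a Boolean function $f\colon\{0,1\}^n\to\{0,1\}$ is analogy-preserving relative to $(R,S)$ if for all $\mathbf{a},\mathbf{b},\mathbf{c},\mathbf{d}\in\{0,1\}^n$ with $(a_i,b_i,c_i,d_i)\in R$ for every $i$ and such that $(f(\mathbf{a}),f(\mathbf{b}),f(\mathbf{c}),x)\in S$ for some $x\in\{0,1\}$, we have $(f(\mathbf{a}),f(\mathbf{b}),f(\mathbf{c}),f(\mathbf{d}))\in S$; $\mathsf{AP}(R,S)$ is the set of all such functions of all arities. $\mathsf{\Omega(1)}$ is the set of all Boolean functions (of all arities) that are constant, a projection, or the negation of a projection. *)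

From mathcomp Require Import all_boot.
Set Implicit Arguments. Unset Strict Implicit. Unset Printing Implicit Defensive.

(* A tuple abcd in {0,1}^4 is encoded as a 4-tuple of booleans (false = 0, true = 1);
   a relation R ⊆ {0,1}^4 is a boolean predicate on such tuples. *)
Definition rel4 := bool -> bool -> bool -> bool -> bool.

Definition tup (s : seq nat) : bool * bool * bool * bool :=
  (nth 0 s 0 == 1, nth 0 s 1 == 1, nth 0 s 2 == 1, nth 0 s 3 == 1).

Definition rel_of (l : seq (seq nat)) : rel4 :=
  fun a b c d => (a, b, c, d) \in map tup l.

Definition R1 : rel4 := rel_of
  [:: [::0;0;0;0]; [::1;0;0;0]; [::0;1;0;0]; [::1;1;0;0]; [::1;0;1;0]; [::0;1;1;0];
      [::1;0;0;1]; [::0;1;0;1]; [::0;0;1;1]; [::1;0;1;1]; [::0;1;1;1]; [::1;1;1;1]].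
Definition R2 : rel4 := rel_of
  [:: [::0;0;0;0]; [::1;0;0;0]; [::0;1;0;0]; [::1;1;0;0]; [::1;0;1;0]; [::0;1;0;1];
      [::0;0;1;1]; [::1;1;1;1]].
Definition R3 : rel4 := rel_of
  [:: [::0;0;0;0]; [::1;1;0;0]; [::1;0;1;0]; [::0;1;0;1]; [::0;0;1;1]; [::1;0;1;1];
      [::0;1;1;1]; [::1;1;1;1]].
Definition R4 : rel4 := rel_of
  [:: [::0;0;0;0]; [::1;1;0;0]; [::1;0;1;0]; [::0;1;0;1]; [::0;0;1;1]; [::1;1;1;1]].
Definition R5 : rel4 := rel_of
  [:: [::0;0;0;0]; [::1;1;0;0]; [::1;0;1;0]; [::0;1;1;0]; [::1;0;0;1]; [::0;1;0;1];
      [::0;0;1;1]; [::1;1;1;1]].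

Definition AP (R S : rel4) (n : nat) (f : ('I_n -> bool) -> bool) : Prop :=
  forall a b c d : 'I_n -> bool,
    (forall i, R (a i) (b i) (c i) (d i)) ->
    (exists x : bool, S (f a) (f b) (f c) x) ->
    S (f a) (f b) (f c) (f d).

Definition Omega1 (n : nat) (f : ('I_n -> bool) -> bool) : Prop :=
  (exists c : bool, forall x, f x = c) \/
  (exists i : 'I_n, forall x, f x = x i) \/
  (exists i : 'I_n, forall x, f x = ~~ x i).

From mathcomp Require Import all_boot.
From Stdlib Require Import FunctionalExtensionality.

(* Since R1 abcd holds iff a <> b or c = d, a function f is analogy-preserving
   relative to (R, R1) iff f a = f b forces f c = f d along R.  With R = R2, the
   tuples 1010 / 0000 / 0011 show that f e_j = f 0 makes f insensitive to
   coordinate j, and the tuples 1010 / 0100 show that f e_i = f e_j (i <> j)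
   forces f e_i = f 0.  As f takes only two values, at most one coordinate is
   relevant, so f is constant, a projection or a negated projection.  R3 is R2
   with every entry negated, and Omega(1) is closed under negating the inputs. *)

Lemma R1E p q r s : R1 p q r s = (p != q) || (r == s).
Proof. by case: p; case: q; case: r; case: s. Qed.

Lemma R2_diag a c d : R2 a a c d -> c = d.
Proof. by case: a; case: c; case: d. Qed.

Lemma R3_diag a c d : R3 a a c d -> c = d.
Proof. by case: a; case: c; case: d. Qed.

Lemma R3_negE a b c d : R3 a b c d = R2 (~~ a) (~~ b) (~~ c) (~~ d).
Proof. by case: a; case: b; case: c; case: d. Qed.

Definition unit_vec {n} (j : 'I_n) : 'I_n -> bool := fun k => k == j.

Definition zero_vec {n} : 'I_n -> bool := fun _ => false.

Section BooleanFunction.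

Variables (n : nat) (f : ('I_n -> bool) -> bool).

Lemma AP_R1P (R : rel4) :
  AP R R1 f <->
  (forall a b c d, (forall i, R (a i) (b i) (c i) (d i)) -> f a = f b -> f c = f d).
Proof.
split=> [fAP a b c d Rabcd fab | fR a b c d Rabcd _]; last first.
  by rewrite R1E; case: eqP => //= /(fR _ _ _ _ Rabcd) ->.
have /(fAP _ _ _ _ Rabcd) : exists x, R1 (f a) (f b) (f c) x.
  by exists (f c); rewrite R1E eqxx orbT.
by rewrite R1E fab eqxx => /eqP.
Qed.

Definition insensitive (j : 'I_n) :=
  forall x y, (forall k, k != j -> x k = y k) -> f x = f y.

Lemma eq_off_insensitive (s : seq 'I_n) :
  {in s, forall j, insensitive j} ->
  forall x y, (forall k, k \notin s -> x k = y k) -> f x = f y.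
Proof.
elim: s => [_ x y xy | j s IHs ins_js x y xy].
  by congr f; apply: functional_extensionality => k; exact: xy.
pose z k := if k == j then y k else x k.
transitivity (f z).
  by apply: (ins_js j (mem_head _ _)) => k /negbTE; rewrite /z => ->.
apply: IHs => [i si | k ks]; first by apply: ins_js; rewrite in_cons si orbT.
rewrite /z; case: eqP => // /eqP kj.
by apply: xy; rewrite in_cons negb_or kj.
Qed.

Lemma insensitive_const :
  (forall j, insensitive j) -> forall x, f x = f zero_vec.
Proof.
by move=> ins x; apply: (@eq_off_insensitive (enum 'I_n)) => [j _|k]; rewrite ?mem_enum.
Qed.

Lemma insensitive_but_one i :
  (forall j, j != i -> insensitive j) ->
  forall x, f x = if x i then f (unit_vec i) else f zero_vec.
Proof.
move=> ins x.
have -> : f x = f (fun k => (k == i) && x i).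
  apply: (@eq_off_insensitive [seq j <- enum 'I_n | j != i]).
    by move=> j; rewrite mem_filter => /andP[/ins].
  by move=> k; rewrite mem_filter mem_enum andbT negbK => /eqP ->; rewrite eqxx.
by case: (x i); congr f; apply: functional_extensionality => k; rewrite ?andbT ?andbF.
Qed.

Hypothesis fAP : AP R2 R1 f.

Lemma AP_R2_insensitive j : f (unit_vec j) = f zero_vec -> insensitive j.
Proof.
move=> fej; have fR := proj1 (AP_R1P R2) fAP.
have flip (x y : 'I_n -> bool) :
    (forall k, k != j -> x k = y k) -> x j -> ~~ y j -> f x = f y.
  move=> xy xj yj; apply: (fR _ _ _ _ _ fej) => k; rewrite /unit_vec /zero_vec.
  have [->|/xy <-] := eqVneq k j; first by rewrite xj (negbTE yj).
  by case: (x k).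
move=> x y xy; have [xyj | ] := eqVneq (x j) (y j).
  by congr f; apply: functional_extensionality => k; case: (eqVneq k j) => [->|/xy].
case xj: (x j); case yj: (y j) => //= _.
- by apply: flip; rewrite ?xj ?yj.
- by apply/esym/flip; rewrite ?xj ?yj // => k /xy.
Qed.

Lemma AP_R2_unit_vec i j :
  i != j -> f (unit_vec i) = f (unit_vec j) -> f (unit_vec i) = f zero_vec.
Proof.
move=> ij; apply: (proj1 (AP_R1P R2) fAP) => k; rewrite /unit_vec /zero_vec.
have [->|ki] := eqVneq k i; first by rewrite (negbTE ij).
by case: (eqVneq k j).
Qed.

Lemma AP_R2_Omega1 : Omega1 f.
Proof.
have [const | /forallPn[i fei]] := boolP [forall j, f (unit_vec j) == f zero_vec].
  left; exists (f zero_vec); apply: insensitive_const => j.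
  by apply: AP_R2_insensitive; apply/eqP/(forallP const).
have ins j : j != i -> insensitive j.
  move=> ji; apply: AP_R2_insensitive; apply/eqP; apply: contraNT (fei) => fej.
  apply/eqP/(@AP_R2_unit_vec i j); first by rewrite eq_sym.
  by move: fei fej; case: (f (unit_vec i)); case: (f (unit_vec j)); case: (f zero_vec).
have fE := @insensitive_but_one i ins; right.
move: fei fE; case: (f (unit_vec i)); case: (f zero_vec) => // _ fE.
- by left; exists i => x; rewrite fE; case: (x i).
- by right; exists i => x; rewrite fE; case: (x i).
Qed.

End BooleanFunction.

Lemma Omega1_AP (R : rel4) n (f : ('I_n -> bool) -> bool) :
  (forall a c d, R a a c d -> c = d) -> Omega1 f -> AP R R1 f.
Proof.
move=> Rdiag fO; apply/AP_R1P => a b c d Rabcd.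
case: fO => [[c0 fE] | [[i fE] | [i fE]]]; rewrite !fE //.
- by move=> abi; move: (Rabcd i); rewrite abi => /Rdiag.
- by move=> /negb_inj abi; move: (Rabcd i); rewrite abi => /Rdiag ->.
Qed.

Definition negate_inputs {n} (f : ('I_n -> bool) -> bool) x := f (fun k => ~~ x k).

Lemma AP_R3_negate_inputs n (f : ('I_n -> bool) -> bool) :
  AP R3 R1 f -> AP R2 R1 (negate_inputs f).
Proof.
move=> /AP_R1P fR; apply/AP_R1P => a b c d Rabcd.
by apply: fR => k; rewrite R3_negE !negbK.
Qed.

Lemma Omega1_negate_inputs n (f : ('I_n -> bool) -> bool) :
  Omega1 (negate_inputs f) -> Omega1 f.
Proof.
have fE x : f x = negate_inputs f (fun k => ~~ x k).
  by congr f; apply: functional_extensionality => k; rewrite negbK.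
case=> [[c fc] | [[i fi] | [i fi]]].
- by left; exists c => x; rewrite fE fc.
- by right; right; exists i => x; rewrite fE fi.
- by right; left; exists i => x; rewrite fE fi negbK.
Qed.

Theorem mainTheorem13 :
  forall (n : nat) (f : ('I_n -> bool) -> bool),
    (AP R2 R1 f <-> Omega1 f) /\ (AP R3 R1 f <-> Omega1 f).
Proof.
move=> n f; split; split.
- exact: AP_R2_Omega1.
- exact: Omega1_AP R2_diag.
- by move=> /AP_R3_negate_inputs /AP_R2_Omega1 /Omega1_negate_inputs.
- exact: Omega1_AP R3_diag.
Qed.
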